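(* Assume that $\kappa_{\mathcal H}(X_i,X_i)<\infty$ almost surely for every $i$, and that for every $y\in\mathcal Y$ the map $u\mapsto\ell(y,u)$ is convex and twice continuously differentiable with $u\mapsto\partial_2\ell(y,u)$ being $\beta_{\ell;2}$-Lipschitz continuous. Then for every $z'\in\mathcal Y$, $\mathbf I_{\hat f}(X_{n+1},z')=\sum_{i=1}^{n+1}[I_{\hat f}(X_{n+1},z')]_iK_{X_i}$, where $$I_{\hat f}(X_{n+1},z')=-\frac1{n+1}\partial_2\ell\big(z',\hat a_\lambda(\mathbf u)^TK_{\bullet,n+1}\big)\big[\nabla_2^2\hat R_\lambda(\mathbf u;\hat a_\lambda(\mathbf u))\big]^+K_{\bullet,n+1}\in\mathbb R^{n+1},$$ and $\hat a_\lambda(\mathbf u)$ is the unique minimizer of $a\mapsto\hat R_\lambda(\mathbf u;a)$ in the range of $K$.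
   Context: Data $D=\{(X_1,Y_1),\dots,(X_n,Y_n)\}\subset\mathcal X\times\mathcal Y$ ($\mathcal X\subset\mathbb R^d$, $\mathcal Y\subset\mathbb R$) and $X_{n+1}$; $\mathcal H$ an RKHS with kernel $\kappa_{\mathcal H}$, $K_x=\kappa_{\mathcal H}(x,\cdot)$, Gram matrix $K=(\kappa_{\mathcal H}(X_i,X_j))_{1\le i,j\le n+1}$ with $j$-th column $K_{\bullet,j}$, $\mathcal A=\mathrm{span}\{K_{X_1},\dots,K_{X_{n+1}}\}$. Loss $\ell$, derivatives $\partial_2,\partial_2^2$ in its second argument, $\lambda>0$, fixed $y,z\in\mathcal Y$, $\mathbf u=(1,\dots,1,1,0)\in\mathbb R^{n+2}$. For $v\in\mathbb R^{n+2}$, $f\in\mathcal H$: $\hat{\mathbf R}_\lambda(v;f)=\frac1{n+1}\sum_{i=1}^nv_i\ell(Y_i,f(X_i))+\frac{v_{n+1}}{n+1}\ell(z,f(X_{n+1}))+\frac{v_{n+2}}{n+1}\ell(y,f(X_{n+1}))+\lambda\|f\|_{\mathcal H}^2$, and for $a\in\mathbb R^{n+1}$: $\hat R_\lambda(v;a)=\hat{\mathbf R}_\lambda(v;\sum_ia_iK_{X_i})=\frac1{n+1}\sum_{i=1}^nv_i\ell(Y_i,a^TK_{\bullet,i})+\frac{v_{n+1}}{n+1}\ell(z,a^TK_{\bullet,n+1})+\frac{v_{n+2}}{n+1}\ell(y,a^TK_{\bullet,n+1})+\lambda a^TKa$; $\nabla^2_2\hat R_\lambda(v;a)$ is its Hessian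 in $a$, and $[\cdot]^+$ its inverse on the range of $K$ (Moore–Penrose pseudo-inverse). $\hat f_{\lambda;D^z}$ is the minimizer of $\hat{\mathbf R}_\lambda(\mathbf u;\cdot)$ over $\mathcal H$. The operator $\partial_2^2\hat{\mathbf R}_\lambda(v;f)=\frac1{n+1}\sum_{i=1}^nv_i\partial_2^2\ell(Y_i,f(X_i))K_{X_i}\otimes K_{X_i}+\frac{v_{n+1}}{n+1}\partial_2^2\ell(z,f(X_{n+1}))K_{X_{n+1}}\otimes K_{X_{n+1}}+\frac{v_{n+2}}{n+1}\partial_2^2\ell(y,f(X_{n+1}))K_{X_{n+1}}\otimes K_{X_{n+1}}+2\lambda\mathrm{Id}$ (with $(g\otimes g)h=\langle g,h\rangle_{\mathcal H}g$) is the second Fréchet differential of $\hat{\mathbf R}_\lambda(v;\cdot)$, and $[\cdot]^+$ is the inverse of its restriction to $\mathcal A$. Finally $\mathbf I_{\hat f}(X_{n+1},z')=-\frac1{n+1}\partial_2\ell(z',\hat f_{\lambda;D^z}(X_{n+1}))[\partial_2^2\hat{\mathbf R}_\lambda(\mathbf u;\hat f_{\lambda;D^z})]^+K_{X_{n+1}}$. *)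

From HB Require Import structures.
From mathcomp Require Import all_boot all_order all_algebra.
From mathcomp Require Import all_classical all_reals all_analysis.
Set Implicit Arguments. Unset Strict Implicit. Unset Printing Implicit Defensive.
Import Order.TTheory GRing.Theory Num.Theory.
Import numFieldNormedType.Exports.
Local Open Scope classical_set_scope.
Local Open Scope ring_scope.

(* Abstract real Hilbert space (V, ip), used to represent the RKHS H.  *)
Definition is_inner_product (R : realType) (V : lmodType R) (ip : V -> V -> R) :=
  [/\ (forall (a : R) (f g h : V), ip (a *: f + g) h = a * ip f h + ip g h),
      (forall f g : V, ip f g = ip g f),
      (forall f : V, 0 <= ip f f) &
      (forall f : V, ip f f = 0 -> f = 0)].

(* completeness for the norm f |-> sqrt (ip f f), stated with squared norms *)
Definition ip_complete (R : realType) (V : lmodType R) (ip : V -> V -> R) :=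
  forall u : nat -> V,
    (forall e : R, 0 < e -> exists N : nat, forall p q : nat, (N <= p)%N -> (N <= q)%N ->
        ip (u p - u q) (u p - u q) < e ^+ 2) ->
    exists f : V, forall e : R, 0 < e -> exists N : nat, forall p : nat, (N <= p)%N ->
        ip (u p - f) (u p - f) < e ^+ 2.

(* (V, ip, Kf) is an RKHS of functions on R^d: f(x) := <f, K_x>, the
   kernel is kappa x x' := <K_x, K_x'>, and f is determined by its values. *)
Definition is_RKHS (R : realType) (d : nat) (V : lmodType R) (ip : V -> V -> R)
    (Kf : 'rV[R]_d -> V) :=
  [/\ is_inner_product ip, ip_complete ip &
      (forall f : V, (forall x, ip f (Kf x) = 0) -> f = 0)].

Definition evalH (R : realType) (d : nat) (V : lmodType R) (ip : V -> V -> R)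
    (Kf : 'rV[R]_d -> V) (f : V) (x : 'rV[R]_d) : R := ip f (Kf x).

Definition kappa (R : realType) (d : nat) (V : lmodType R) (ip : V -> V -> R)
    (Kf : 'rV[R]_d -> V) (x x' : 'rV[R]_d) : R := ip (Kf x) (Kf x').

Definition d2l (R : realType) (l : R -> R -> R) (y u : R) : R := derive1 (l y) u.
Definition d22l (R : realType) (l : R -> R -> R) (y u : R) : R := derive1 (derive1 (l y)) u.

Definition loss_assumptions (R : realType) (Ysp : set R) (l : R -> R -> R) (beta : R) :=
  forall y, Ysp y ->
  [/\ (forall (u v t : R), 0 <= t -> t <= 1 ->
         l y (t * u + (1 - t) * v) <= t * l y u + (1 - t) * l y v),
      (forall u : R, derivable (l y) u 1),
      (forall u : R, derivable (derive1 (l y)) u 1),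
      continuous (derive1 (derive1 (l y))) &
      (forall u u' : R, `|d2l l y u - d2l l y u'| <= beta * `|u - u'|)].

Definition penrose (R : realType) (m : nat) (A B : 'M[R]_m) :=
  [/\ A *m B *m A = A, B *m A *m B = B, (A *m B)^T = A *m B & (B *m A)^T = B *m A].

Definition mpinv (R : realType) (m : nat) (A : 'M[R]_m) : 'M[R]_m :=
  xget 0 [set B | penrose A B].

Definition hessian (R : realType) (m : nat) (f : 'cV[R]_m -> R) (a : 'cV[R]_m) : 'M[R]_m :=
  \matrix_(i, j) derive (fun b => derive f b (delta_mx i 0)) a (delta_mx j 0).

Definition restr_inv (R : realType) (V : lmodType R) (T : V -> V) (A : set V) (b : V) : V :=
  xget 0 [set g | A g /\ T g = b].

Section Empirical.
Variables (R : realType) (d n : nat) (V : lmodType R) (ip : V -> V -> R)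
  (Kf : 'rV[R]_d -> V) (l : R -> R -> R) (lam : R)
  (X : 'I_n.+1 -> 'rV[R]_d) (Y : 'I_n -> R) (y z : R).

(* data index i < n (0-based) as an index of X, and as an index of v *)
Definition iX (i : 'I_n) : 'I_n.+1 := widen_ord (leqnSn n) i.
Definition iv (i : 'I_n) : 'I_n.+2 := widen_ord (ltnW (leqnSn n.+1)) i.
(* the (n+1)-th and (n+2)-th coordinates of v *)
Definition v_z : 'I_n.+2 := inord n.
Definition v_y : 'I_n.+2 := ord_max.

Definition uvec : 'I_n.+2 -> R := fun i => if i == ord_max then 0 else 1.

Local Notation ev := (evalH ip Kf).

Definition Rbold (v : 'I_n.+2 -> R) (f : V) : R :=
  (n.+1%:R)^-1 * \sum_(i < n) v (iv i) * l (Y i) (ev f (X (iX i)))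
  + v v_z / n.+1%:R * l z (ev f (X ord_max))
  + v v_y / n.+1%:R * l y (ev f (X ord_max))
  + lam * ip f f.

Definition Gram : 'M[R]_n.+1 := \matrix_(i, j) kappa ip Kf (X i) (X j).

Definition comb (a : 'cV[R]_n.+1) : V := \sum_i a i 0 *: Kf (X i).

Definition Rhat (v : 'I_n.+2 -> R) (a : 'cV[R]_n.+1) : R := Rbold v (comb a).

Definition in_rangeK (a : 'cV[R]_n.+1) := exists b : 'cV[R]_n.+1, a = Gram *m b.

Definition spanA : set V := [set g | exists a : 'cV[R]_n.+1, g = comb a].

(* second Frechet differential of Rbold v at f, as an operator on V *)
Definition d2Rbold (v : 'I_n.+2 -> R) (f : V) (g : V) : V :=
  (n.+1%:R)^-1 *: \sum_(i < n)
     (v (iv i) * d22l l (Y i) (ev f (X (iX i))) * ip (Kf (X (iX i))) g) *: Kf (X (iX i))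
  + (v v_z / n.+1%:R * d22l l z (ev f (X ord_max)) * ip (Kf (X ord_max)) g) *: Kf (X ord_max)
  + (v v_y / n.+1%:R * d22l l y (ev f (X ord_max)) * ip (Kf (X ord_max)) g) *: Kf (X ord_max)
  + (2 * lam) *: g.

Definition Ibold (fhat : V) (z' : R) : V :=
  (- (n.+1%:R)^-1 * d2l l z' (ev fhat (X ord_max)))
    *: restr_inv (d2Rbold uvec fhat) spanA (Kf (X ord_max)).

Definition Ivec (ahat : 'cV[R]_n.+1) (z' : R) : 'cV[R]_n.+1 :=
  (- (n.+1%:R)^-1 * d2l l z' ((ahat^T *m col ord_max Gram) 0 0))
    *: (mpinv (hessian (Rhat uvec) ahat) *m col ord_max Gram).

End Empirical.

(* The minimiser [fhat] of the regularised risk lies in the span A of the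
   K_{X_i}: projecting f onto A keeps the values f(X_i) = <f, K_{X_i}> and
   does not increase the norm, hence does not increase the risk, and the risk
   is strongly convex (it satisfies a midpoint inequality with a -lam/4 |f1 - f2|^2
   defect), so its minimiser is unique; thus fhat = sum_i ahat_i K_{X_i}.
   Convexity of the loss gives a nonnegative second derivative, so the second
   differential T of the risk satisfies <T g, g> >= 2 lam <g, g>, and the
   matrix of <T K_{X_j}, K_{X_i}> is the Hessian H of a |-> Rhat(u; a).
   Positivity forces ker H <= ker K, whence H H^+ K = K, and
   g = sum_i (H^+ K_{.,n+1})_i K_{X_i} is the unique solution of
   T g = K_{X_{n+1}} in A. *)

From HB Require Import structures.
From mathcomp Require Import all_boot all_order all_algebra.
From mathcomp Require Import all_classical all_reals all_analysis.
From mathcomp Require Import ring lra.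
Set Implicit Arguments. Unset Strict Implicit. Unset Printing Implicit Defensive.
Import Order.TTheory GRing.Theory Num.Theory.
Import numFieldNormedType.Exports.
Local Open Scope classical_set_scope.
Local Open Scope ring_scope.

Section ConvexDerivative.
Variables (R : realType) (f : R -> R).

Definition slope (x y : R) : R := (f y - f x) / (y - x).

Lemma slopeC x y : slope x y = slope y x.
Proof. by rewrite /slope -mulrNN -invrN !opprB. Qed.

Lemma slope_shift h u : h^-1 *: (f (h + u) - f u) = slope u (h + u).
Proof. by rewrite /slope addrK mulrC. Qed.

Hypothesis f_convex : forall u v t : R, 0 <= t -> t <= 1 ->
  f (t * u + (1 - t) * v) <= t * f u + (1 - t) * f v.

Lemma convex_chord x y z : x < y -> y < z ->
  (z - x) * f y <= (y - x) * f z + (z - y) * f x.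
Proof.
move=> xy yz; have zx : 0 < z - x by rewrite subr_gt0 (lt_trans xy).
pose t := (y - x) / (z - x).
have t0 : 0 <= t by apply: divr_ge0; rewrite subr_ge0 ltW // (lt_trans xy).
have t1 : t <= 1 by rewrite ler_pdivrMr // mul1r lerD2r ltW.
have tzx : t * (z - x) = y - x by rewrite divfK // gt_eqF.
have ty : t * z + (1 - t) * x = y by clearbody t; lra.
have := ler_wpM2l (ltW zx) (f_convex z x t0 t1); rewrite ty.
have -> : (z - x) * (t * f z + (1 - t) * f x)
  = (t * (z - x)) * f z + (z - x - t * (z - x)) * f x by ring.
by rewrite tzx; have -> : z - x - (y - x) = z - y by ring.
Qed.

Lemma convex_slope_mono_r x y z : x < y -> y < z -> slope x y <= slope x z.
Proof.
move=> xy yz; have := convex_chord xy yz.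
have [yx0 zx0] : 0 < y - x /\ 0 < z - x by split; rewrite subr_gt0 // (lt_trans xy).
rewrite /slope ler_pdivrMr // mulrAC ler_pdivlMr //; lra.
Qed.

Lemma convex_slope_mono_l x y z : x < y -> y < z -> slope x z <= slope y z.
Proof.
move=> xy yz; have := convex_chord xy yz.
have [zy0 zx0] : 0 < z - y /\ 0 < z - x by split; rewrite subr_gt0 // (lt_trans xy).
rewrite /slope ler_pdivrMr // mulrAC ler_pdivlMr //; lra.
Qed.

Lemma convex_slope_le x y z : x < y -> y < z -> slope x y <= slope y z.
Proof.
by move=> xy yz; exact: le_trans (convex_slope_mono_r xy yz) (convex_slope_mono_l xy yz).
Qed.

Hypothesis f_derivable : forall u, derivable f u 1.

Lemma derive1_le_slope u v : u < v -> derive1 f u <= slope u v.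
Proof.
move=> uv; rewrite derive1E; apply: limr_le; first exact: f_derivable.
near=> h.
have h0 : h != 0 by near: h; exact: nbhs_dnbhs_neq.
have hs : `|h| < v - u by near: h; apply: dnbhs0_lt; rewrite subr_gt0.
rewrite /= scaler1 slope_shift.
move: h0; rewrite neq_lt => /orP[hn|hp].
- by rewrite slopeC; apply: convex_slope_le; lra.
- by move: hs; rewrite gtr0_norm // => hs; apply: convex_slope_mono_r; lra.
Unshelve. all: by end_near. Qed.

Lemma slope_le_derive1 u v : u < v -> slope u v <= derive1 f v.
Proof.
move=> uv; rewrite derive1E; apply: limr_ge; first exact: f_derivable.
near=> h.
have h0 : h != 0 by near: h; exact: nbhs_dnbhs_neq.
have hs : `|h| < v - u by near: h; apply: dnbhs0_lt; rewrite subr_gt0.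
rewrite /= scaler1 slope_shift.
move: h0; rewrite neq_lt => /orP[hn|hp].
- move: hs; rewrite ltr0_norm // => hs.
  by rewrite [leRHS]slopeC; apply: convex_slope_mono_l; lra.
- by apply: convex_slope_le; lra.
Unshelve. all: by end_near. Qed.

Lemma convex_derive1_homo : {homo derive1 f : u v / u <= v}.
Proof.
move=> u v; rewrite le_eqVlt => /orP[/eqP->//|uv].
exact: le_trans (derive1_le_slope uv) (slope_le_derive1 uv).
Qed.

Hypothesis f'_derivable : forall u, derivable (derive1 f) u 1.

Lemma convex_derive2_ge0 x : 0 <= derive1 (derive1 f) x.
Proof.
rewrite derive1E; apply: limr_ge; first exact: f'_derivable.
near=> h.
have h0 : h != 0 by near: h; exact: nbhs_dnbhs_neq.
rewrite /= scaler1; move: h0; rewrite neq_lt => /orP[hn|hp].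
- by rewrite nmulr_rge0 ?invr_lt0 // subr_le0 convex_derive1_homo //; lra.
- by rewrite pmulr_rge0 ?invr_gt0 // subr_ge0 convex_derive1_homo //; lra.
Unshelve. all: by end_near. Qed.

End ConvexDerivative.

Section PseudoInverse.
Variable R : realType.

Lemma row_sqnorm_eq0 m (w : 'rV[R]_m) : (w *m w^T) 0 0 = 0 -> w = 0.
Proof.
rewrite mxE; under eq_bigr => j _ do rewrite mxE -expr2.
move=> /psumr_eq0P w0; apply/rowP => j; rewrite mxE.
by apply/eqP; rewrite -sqrf_eq0; apply/eqP; apply: w0 => // k _; exact: sqr_ge0.
Qed.

Lemma mulmx_trmx_unit r m (C : 'M[R]_(r, m)) : row_free C -> C *m C^T \in unitmx.
Proof.
move=> fC; rewrite -row_free_unit -kermx_eq0; apply/eqP/row_matrixP => i.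
rewrite row0; set u := row i _.
have uCC : u *m (C *m C^T) = 0 by rewrite /u -row_mul mulmx_ker row0.
have uC : u *m C = 0.
  by apply: row_sqnorm_eq0; rewrite trmx_mul !mulmxA -(mulmxA u) uCC !mul0mx mxE.
by apply/eqP; rewrite -(mulmx_free_eq0 _ fC) uC.
Qed.

(* For a full-rank factorisation A = B C, the pseudo-inverse is C^T (C C^T)^-1 (B^T B)^-1 B^T. *)
Lemma penrose_factor r m (B : 'M[R]_(m, r)) (C : 'M[R]_(r, m)) :
  row_free B^T -> row_free C -> exists P, penrose (B *m C) P.
Proof.
move=> fB fC.
set G1 := B^T *m B; set G2 := C *m C^T.
have u1 : G1 \in unitmx by have := mulmx_trmx_unit fB; rewrite trmxK.
have u2 : G2 \in unitmx by exact: mulmx_trmx_unit.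
have sG1 : G1^T = G1 by rewrite /G1 trmx_mul trmxK.
have sG2 : G2^T = G2 by rewrite /G2 trmx_mul trmxK.
exists (C^T *m invmx G2 *m invmx G1 *m B^T).
have AP : B *m C *m (C^T *m invmx G2 *m invmx G1 *m B^T) = B *m invmx G1 *m B^T.
  by rewrite -!mulmxA (mulmxA C) (mulmxA (C *m C^T)) mulmxV // mul1mx mulmxA.
have PA : C^T *m invmx G2 *m invmx G1 *m B^T *m (B *m C) = C^T *m invmx G2 *m C.
  by rewrite -!mulmxA (mulmxA B^T) (mulmxA (invmx G1)) mulVmx // mul1mx mulmxA.
split.
- by rewrite AP -!mulmxA (mulmxA B^T) (mulmxA (invmx G1)) mulVmx // mul1mx.
- by rewrite PA -!mulmxA (mulmxA C) (mulmxA (invmx G2)) mulVmx // mul1mx.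
- by rewrite AP !trmx_mul trmxK trmx_inv sG1 mulmxA.
- by rewrite PA !trmx_mul trmxK trmx_inv sG2 mulmxA.
Qed.

Lemma penrose_exists m (A : 'M[R]_m) : exists P, penrose A P.
Proof.
have fC : row_free (row_base A) by exact: row_base_free.
have fB : row_free (col_base A)^T by rewrite /row_free mxrank_tr; exact: col_base_full.
by have := penrose_factor fB fC; rewrite mulmx_base.
Qed.

Lemma mpinv_penrose m (A : 'M[R]_m) : penrose A (mpinv A).
Proof. by apply: xgetPex; exact: penrose_exists. Qed.

Lemma mulmx_mpinv_ker m (H K : 'M[R]_m) : H^T = H -> K^T = K ->
  (forall x : 'cV_m, H *m x = 0 -> K *m x = 0) -> H *m mpinv H *m K = K.
Proof.
move=> sH sK kerHK; have [p1 _ _ _] := mpinv_penrose H; set P := mpinv H in p1 *.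
have HP : H *m (1%:M - P *m H) = 0 by rewrite mulmxBr mulmx1 mulmxA p1 subrr.
have KP : K *m (1%:M - P *m H) = 0.
  apply/matrixP => i j; have := kerHK ((1%:M - P *m H) *m delta_mx j 0).
  rewrite mulmxA HP mul0mx => /(_ erefl); rewrite mulmxA => /matrixP/(_ i 0).
  by rewrite -colE !mxE.
have KPH : K = K *m P *m H.
  by apply/eqP; rewrite -subr_eq0 -{1}[K]mulmx1 -mulmxA -mulmxBr KP.
have {}KPH : K = H *m P^T *m K.
  by apply: trmx_inj; rewrite !trmx_mul trmxK sK sH mulmxA -KPH.
by rewrite [in LHS]KPH !mulmxA p1 -KPH.
Qed.

End PseudoInverse.

Section InnerProduct.
Variables (R : realType) (V : lmodType R) (ip : V -> V -> R).
Hypothesis hip : is_inner_product ip.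

Lemma ipC f g : ip f g = ip g f.
Proof. by case: hip. Qed.

Lemma ipDl f g h : ip (f + g) h = ip f h + ip g h.
Proof. by case: hip => lin _ _ _; have := lin 1 f g h; rewrite scale1r mul1r. Qed.

Lemma ip0l h : ip 0 h = 0.
Proof. by have := ipDl 0 0 h; rewrite addr0; lra. Qed.

Lemma ipZl a f h : ip (a *: f) h = a * ip f h.
Proof. by case: hip => lin _ _ _; have := lin a f 0 h; rewrite !addr0 ip0l addr0. Qed.

Lemma ipNl f h : ip (- f) h = - ip f h.
Proof. by rewrite -scaleN1r ipZl mulN1r. Qed.

Lemma ipBl f g h : ip (f - g) h = ip f h - ip g h.
Proof. by rewrite ipDl ipNl. Qed.

Lemma ipDr f g h : ip h (f + g) = ip h f + ip h g.
Proof. by rewrite ipC ipDl !(ipC _ h). Qed.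

Lemma ipZr a f h : ip h (a *: f) = a * ip h f.
Proof. by rewrite ipC ipZl ipC. Qed.

Lemma ipBr f g h : ip h (f - g) = ip h f - ip h g.
Proof. by rewrite ipC ipBl !(ipC _ h). Qed.

Lemma ip_suml k (F : 'I_k -> V) h : ip (\sum_(i < k) F i) h = \sum_(i < k) ip (F i) h.
Proof. exact: (big_morph (ip^~ h) (fun f g => ipDl f g h) (ip0l h)). Qed.

Lemma ip_ge0 f : 0 <= ip f f.
Proof. by case: hip. Qed.

Lemma ip_le0_eq0 f : ip f f <= 0 -> f = 0.
Proof. by case: hip => _ _ _ def le0; apply: def; apply/eqP; rewrite eq_le le0 ip_ge0. Qed.

Lemma ip_midpoint f1 f2 :
  ip (2^-1 *: (f1 + f2)) (2^-1 *: (f1 + f2))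
  = 2^-1 * ip f1 f1 + 2^-1 * ip f2 f2 - 2^-1 * 2^-1 * ip (f1 - f2) (f1 - f2).
Proof.
rewrite ipZl ipZr ipBl !ipBr !ipDl !ipDr (ipC f2 f1).
by move: (ip f1 f1) (ip f1 f2) (ip f2 f2) => a b c; field.
Qed.

Lemma ip_line h f g :
  ip (h *: f + g) (h *: f + g) = h * (h * ip f f + ip f g) + (h * ip f g + ip g g).
Proof. by rewrite !ipDl !ipZl !ipDr !ipZr (ipC g f). Qed.

End InnerProduct.

Section GramMatrix.
Variables (R : realType) (d n : nat) (V : lmodType R) (ip : V -> V -> R)
  (Kf : 'rV[R]_d -> V) (X : 'I_n.+1 -> 'rV[R]_d).
Hypothesis hip : is_inner_product ip.

Local Notation K := (Gram ip Kf X).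
Local Notation comb := (comb Kf X).

Lemma Gram_sym : K^T = K.
Proof. by apply/matrixP => i j; rewrite !mxE /kappa (ipC hip). Qed.

Lemma ip_comb a h : ip (comb a) h = \sum_i a i 0 * ip (Kf (X i)) h.
Proof. by rewrite (ip_suml hip); apply: eq_bigr => i _; rewrite (ipZl hip). Qed.

Lemma ip_comb_Gram a j : ip (comb a) (Kf (X j)) = (K *m a) j 0.
Proof. by rewrite ip_comb mxE; apply: eq_bigr => i _; rewrite mxE /kappa mulrC (ipC hip). Qed.

Lemma ip_comb_Gram_col a j : ip (comb a) (Kf (X j)) = (a^T *m col j K) 0 0.
Proof. by rewrite ip_comb mxE; apply: eq_bigr => i _; rewrite !mxE. Qed.

Lemma ip_comb_comb a : ip (comb a) (comb a) = \sum_j a j 0 * (K *m a) j 0.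
Proof. by rewrite ip_comb; apply: eq_bigr => j _; rewrite (ipC hip) ip_comb_Gram. Qed.

Lemma combD a b : comb (a + b) = comb a + comb b.
Proof. by rewrite /comb -big_split; apply: eq_bigr => i _; rewrite mxE scalerDl. Qed.

Lemma combZ c a : comb (c *: a) = c *: comb a.
Proof. by rewrite /comb scaler_sumr; apply: eq_bigr => i _; rewrite mxE scalerA. Qed.

Lemma comb_delta i : comb (delta_mx i 0) = Kf (X i).
Proof.
rewrite /comb (bigD1 i) //= mxE !eqxx scale1r big1 ?addr0 // => j /negbTE ji.
by rewrite mxE ji scale0r.
Qed.

Lemma comb_Gram_eq0 a : K *m a = 0 -> comb a = 0.
Proof.
move=> Ka; apply: (ip_le0_eq0 hip); rewrite ip_comb_comb big1 // => j _.
by rewrite Ka mxE mulr0.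
Qed.

Lemma Gram_Gram_mpinv : K *m (K *m mpinv K) = K.
Proof.
have [KPK _ KP_sym _] := mpinv_penrose K.
by have := congr1 trmx KPK; rewrite trmx_mul KP_sym Gram_sym.
Qed.

Lemma Gram_mpinv_eval f :
  K *m (mpinv K *m \col_j ip f (Kf (X j))) = \col_j ip f (Kf (X j)).
Proof.
set w := \col_j _; have [KPK _ KP_sym _] := mpinv_penrose K.
set P := mpinv K in KPK KP_sym *.
set v := w - K *m (P *m w).
have Kv : K *m v = 0 by rewrite mulmxBr !mulmxA -(mulmxA K K) Gram_Gram_mpinv subrr.
(* [v] lies in the kernel of [K], hence is orthogonal to the evaluation vector [w] *)
have vw : (v^T *m w) 0 0 = 0.
  rewrite mxE -[RHS](ip0l hip f) -(comb_Gram_eq0 Kv) ip_comb.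
  by apply: eq_bigr => j _; rewrite !mxE (ipC hip).
have vKP : v^T *m (K *m P) = 0.
  apply: trmx_inj; rewrite trmx_mul trmxK KP_sym trmx0.
  by rewrite /v mulmxBr !mulmxA KPK subrr.
have vv : (v^T *m v^T^T) 0 0 = 0.
  by rewrite trmxK {2}/v mulmxBr (mulmxA K P w) (mulmxA v^T) vKP mul0mx subr0.
apply/eqP; rewrite eq_sym -subr_eq0; apply/eqP/trmx_inj.
by rewrite trmx0; exact: row_sqnorm_eq0.
Qed.

Lemma span_projection f : exists a, [/\ in_rangeK ip Kf X a,
  forall j, ip (comb a) (Kf (X j)) = ip f (Kf (X j)) & ip (comb a) (comb a) <= ip f f].
Proof.
set w := \col_j ip f (Kf (X j)).
set b := mpinv K *m (mpinv K *m w).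
have Ka : K *m (K *m b) = w.
  by rewrite /b !mulmxA -(mulmxA K K) Gram_Gram_mpinv -mulmxA Gram_mpinv_eval.
exists (K *m b); split; first by exists b.
- by move=> j; rewrite ip_comb_Gram Ka [w _ _]mxE.
- have fa : ip (comb (K *m b)) f = ip (comb (K *m b)) (comb (K *m b)).
    rewrite ip_comb_comb ip_comb; apply: eq_bigr => j _.
    by rewrite Ka [w _ _]mxE (ipC hip f).
  have := ip_ge0 hip (f - comb (K *m b)).
  rewrite (ipBl hip) !(ipBr hip) (ipC hip f) fa; lra.
Qed.

End GramMatrix.

Section Loss.
Variables (R : realType) (Ysp : set R) (l : R -> R -> R) (beta : R).
Hypothesis hl : loss_assumptions Ysp l beta.

Lemma loss_derivable y : Ysp y -> forall u, derivable (l y) u 1.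
Proof. by case/hl => _ ? _ _ _. Qed.

Lemma loss_derivable2 y : Ysp y -> forall u, derivable (derive1 (l y)) u 1.
Proof. by case/hl => _ _ ? _ _. Qed.

Lemma loss_derive2_ge0 y u : Ysp y -> 0 <= d22l l y u.
Proof. by case/hl => cvx d1 d2 _ _; exact: convex_derive2_ge0. Qed.

Lemma loss_midpoint y a b : Ysp y ->
  l y (2^-1 * (a + b)) <= 2^-1 * l y a + 2^-1 * l y b.
Proof.
case/hl => cvx _ _ _ _.
have h1 : 1 - 2^-1 = 2^-1 :> R by field.
by have := cvx a b 2^-1; rewrite h1 mulrDr invr_ge0 ler0n invf_le1 ?ler1n //; apply.
Qed.

End Loss.

Section Objective.
Variables (R : realType) (d n : nat) (V : lmodType R) (ip : V -> V -> R)
  (Kf : 'rV[R]_d -> V) (X : 'I_n.+1 -> 'rV[R]_d).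
Hypothesis hip : is_inner_product ip.
Variables (Ysp : set R) (l : R -> R -> R) (beta lam : R) (Y : 'I_n -> R) (y z : R).
Hypothesis hl : loss_assumptions Ysp l beta.
Hypotheses (hY : forall i, Ysp (Y i)) (hy : Ysp y) (hz : Ysp z).
Variable v : 'I_n.+2 -> R.
Hypothesis v_ge0 : forall k, 0 <= v k.

Local Notation ev := (evalH ip Kf).
Local Notation N := (n.+1%:R : R).
Local Notation Rb := (Rbold ip Kf l lam X Y y z v).

Lemma Rbold_le_eval f g : 0 <= lam -> (forall j, ev f (X j) = ev g (X j)) ->
  ip f f <= ip g g -> Rb f <= Rb g.
Proof.
move=> lam0 fg ffgg; rewrite /Rbold !fg.
under eq_bigr => i _ do rewrite fg.
by rewrite lerD2l ler_wpM2l.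
Qed.

Lemma Rbold_midpoint f1 f2 : Rb (2^-1 *: (f1 + f2))
  <= 2^-1 * Rb f1 + 2^-1 * Rb f2 - lam * (2^-1 * 2^-1 * ip (f1 - f2) (f1 - f2)).
Proof.
have term w y' x : 0 <= w -> Ysp y' -> w * l y' (ev (2^-1 *: (f1 + f2)) x)
    <= 2^-1 * (w * l y' (ev f1 x)) + 2^-1 * (w * l y' (ev f2 x)).
  move=> w0 hy'; rewrite /evalH (ipZl hip) (ipDl hip) !(mulrCA 2^-1) -mulrDr.
  by rewrite ler_wpM2l // (loss_midpoint hl).
have N0 : 0 <= N^-1 by rewrite invr_ge0 ler0n.
have Hsum : N^-1 * \sum_(i < n) v (iv i) * l (Y i) (ev (2^-1 *: (f1 + f2)) (X (iX i)))
  <= 2^-1 * (N^-1 * \sum_(i < n) v (iv i) * l (Y i) (ev f1 (X (iX i))))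
   + 2^-1 * (N^-1 * \sum_(i < n) v (iv i) * l (Y i) (ev f2 (X (iX i)))).
  rewrite !(mulrCA 2^-1) -mulrDr ler_wpM2l // !mulr_sumr -big_split.
  by apply: ler_sum => i _; exact: term.
have Hz := term (v (v_z n) / N) z (X ord_max) (divr_ge0 (v_ge0 _) (ler0n _ _)) hz.
have Hy := term (v (v_y n) / N) y (X ord_max) (divr_ge0 (v_ge0 _) (ler0n _ _)) hy.
have avg a b c a1 b1 c1 a2 b2 c2 p q r : a <= 2^-1 * a1 + 2^-1 * a2 ->
    b <= 2^-1 * b1 + 2^-1 * b2 -> c <= 2^-1 * c1 + 2^-1 * c2 ->
    a + b + c + lam * (2^-1 * p + 2^-1 * q - r)
    <= 2^-1 * (a1 + b1 + c1 + lam * p) + 2^-1 * (a2 + b2 + c2 + lam * q) - lam * r.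
  by move=> *; lra.
by rewrite /Rbold (ip_midpoint hip); exact: avg.
Qed.

Hypothesis lam_gt0 : 0 < lam.

Lemma Rbold_minimizer_unique f1 f2 :
  (forall g, Rb f1 <= Rb g) -> Rb f2 <= Rb f1 -> f2 = f1.
Proof.
move=> f1_min f21.
have := Rbold_midpoint f1 f2; have := f1_min (2^-1 *: (f1 + f2)).
set e := ip (f1 - f2) (f1 - f2) => mid1 mid2.
have : lam * (2^-1 * 2^-1 * e) <= 0 by lra.
rewrite pmulr_rle0 // pmulr_rle0 ?mulr_gt0 ?invr_gt0 ?ltr0n // => /(ip_le0_eq0 hip).
by move/eqP; rewrite subr_eq0 => /eqP.
Qed.

Lemma Rbold_minimizer_comb fhat ahat : (forall g, Rb fhat <= Rb g) ->
  (forall a, in_rangeK ip Kf X a ->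
     Rhat ip Kf l lam X Y y z v ahat <= Rhat ip Kf l lam X Y y z v a) ->
  fhat = comb Kf X ahat.
Proof.
move=> fhat_min ahat_min; have [a [ra ev_a nrm_a]] := span_projection Kf X hip fhat.
apply/esym/Rbold_minimizer_unique => //.
exact: le_trans (ahat_min a ra) (Rbold_le_eval (ltW lam_gt0) ev_a nrm_a).
Qed.

End Objective.

Section LineDerivative.
Variable R : realType.

Lemma derive_line (V : normedModType R) (F : V -> R) b v :
  derive F b v = derive1 (fun h => F (h *: v + b)) 0.
Proof.
rewrite /derive /derive1.
suff -> : (fun h : R => h^-1 *: ((F \o shift b) (h *: v) - F b)) =
  (fun h : R => h^-1 *: (F ((h + 0) *: v + b) - F (0 *: v + b))) by [].
by apply: funext => h /=; rewrite addr0 scale0r add0r.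
Qed.

Lemma is_derive_mulrl (k : R) (f : R -> R) (x a : R) : is_derive x (1:R) f a ->
  is_derive x (1:R) (fun h => k * f h) (k * a).
Proof. exact: is_deriveZ. Qed.

Lemma is_derive_addf (f g : R -> R) (x a b : R) :
  is_derive x (1:R) f a -> is_derive x (1:R) g b ->
  is_derive x (1:R) (fun h => f h + g h) (a + b).
Proof. exact: is_deriveD. Qed.

Lemma is_derive_sumf k (F : 'I_k -> R -> R) (a : 'I_k -> R) (x : R) :
  (forall i, is_derive x (1:R) (F i) (a i)) ->
  is_derive x (1:R) (fun h => \sum_(i < k) F i h) (\sum_(i < k) a i).
Proof. by move=> H; have := is_derive_sum H; rewrite fct_sumE. Qed.

Lemma is_derive_affine (c e x : R) : is_derive x (1:R) (fun h => h * c + e) c.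
Proof.
have e0 : is_derive x 1 (fun _ : R => e) (0 : R) := is_derive_cst e x 1.
have := is_derive_addf (is_derive_mulrl c (is_derive_id x 1)) e0.
rewrite mulr1 addr0 => H.
by have -> : (fun h => h * c + e) = (fun h => c * h + e) by apply: funext => h; rewrite mulrC.
Qed.

Lemma is_derive_comp_affine (g : R -> R) (c e x : R) : (forall u, derivable g u 1) ->
  is_derive x (1:R) (fun h => g (h * c + e)) (derive1 g (x * c + e) * c).
Proof.
move=> dg; apply: (is_derive1_comp (g := fun h => h * c + e)) (is_derive_affine c e x).
by rewrite derive1E; exact/derivableP/dg.
Qed.

Lemma is_derive0_quadratic (A B C : R) :
  is_derive (0:R) (1:R) (fun h => h * (h * A + B) + (h * B + C)) (B + B).
Proof.
have := is_derive_addf (@is_deriveM R R^o id (fun h => h * A + B) 0 1 1 A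
  (is_derive_id _ _) (is_derive_affine A B 0)) (is_derive_affine B C 0).
by rewrite /= !mul0r scale0r !add0r scaler1.
Qed.

End LineDerivative.

Section Differentials.
Variables (R : realType) (d n : nat) (V : lmodType R) (ip : V -> V -> R)
  (Kf : 'rV[R]_d -> V) (X : 'I_n.+1 -> 'rV[R]_d).
Hypothesis hip : is_inner_product ip.
Variables (Ysp : set R) (l : R -> R -> R) (beta lam : R) (Y : 'I_n -> R) (y z : R).
Hypothesis hl : loss_assumptions Ysp l beta.
Hypotheses (hY : forall i, Ysp (Y i)) (hy : Ysp y) (hz : Ysp z).
Variable v : 'I_n.+2 -> R.

Local Notation ev := (evalH ip Kf).
Local Notation N := (n.+1%:R : R).

Lemma evalH_line h f g x : ev (h *: f + g) x = h * ev f x + ev g x.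
Proof. by rewrite /evalH (ipDl hip) (ipZl hip). Qed.

Definition dRbold (g f : V) : R :=
  N^-1 * \sum_(i < n) v (iv i) * (d2l l (Y i) (ev g (X (iX i))) * ev f (X (iX i)))
  + v (v_z n) / N * (d2l l z (ev g (X ord_max)) * ev f (X ord_max))
  + v (v_y n) / N * (d2l l y (ev g (X ord_max)) * ev f (X ord_max))
  + lam * (ip f g + ip f g).

Definition d2Rform (g f1 f2 : V) : R :=
  N^-1 * \sum_(i < n)
    v (iv i) * (ev f1 (X (iX i)) * (d22l l (Y i) (ev g (X (iX i))) * ev f2 (X (iX i))))
  + v (v_z n) / N * (ev f1 (X ord_max) * (d22l l z (ev g (X ord_max)) * ev f2 (X ord_max)))
  + v (v_y n) / N * (ev f1 (X ord_max) * (d22l l y (ev g (X ord_max)) * ev f2 (X ord_max)))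
  + lam * (ip f1 f2 + ip f1 f2).

Lemma Rbold_line_derive f g :
  derive1 (fun h => Rbold ip Kf l lam X Y y z v (h *: f + g)) 0 = dRbold g f.
Proof.
have -> : (fun h => Rbold ip Kf l lam X Y y z v (h *: f + g)) =
  (fun h => N^-1 * \sum_(i < n) v (iv i) * l (Y i) (h * ev f (X (iX i)) + ev g (X (iX i)))
  + v (v_z n) / N * l z (h * ev f (X ord_max) + ev g (X ord_max))
  + v (v_y n) / N * l y (h * ev f (X ord_max) + ev g (X ord_max))
  + lam * (h * (h * ip f f + ip f g) + (h * ip f g + ip g g))).
  apply: funext => h; rewrite /Rbold !evalH_line.
  under eq_bigr => i _ do rewrite evalH_line.
  by rewrite (ip_line hip).
rewrite derive1E; apply: derive_val.
have dl y' (hy' : Ysp y') x :=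
  is_derive_comp_affine (ev f x) (ev g x) 0 (loss_derivable hl hy').
have T1 := is_derive_mulrl N^-1
  (is_derive_sumf (fun i => is_derive_mulrl (v (iv i)) (dl _ (hY i) (X (iX i))))).
have T2 := is_derive_mulrl (v (v_z n) / N) (dl _ hz (X ord_max)).
have T3 := is_derive_mulrl (v (v_y n) / N) (dl _ hy (X ord_max)).
have T4 := is_derive_mulrl lam (is_derive0_quadratic (ip f f) (ip f g) (ip g g)).
apply: (is_derive_eq (is_derive_addf (is_derive_addf (is_derive_addf T1 T2) T3) T4)).
under eq_bigr => i _ do rewrite mul0r add0r.
by rewrite !mul0r !add0r /dRbold /d2l.
Qed.

Lemma dRbold_line_derive f1 f2 g :
  derive1 (fun h => dRbold (h *: f2 + g) f1) 0 = d2Rform g f1 f2.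
Proof.
have -> : (fun h => dRbold (h *: f2 + g) f1) =
  (fun h => N^-1 * \sum_(i < n)
      v (iv i) * (ev f1 (X (iX i)) * d2l l (Y i) (h * ev f2 (X (iX i)) + ev g (X (iX i))))
  + v (v_z n) / N * (ev f1 (X ord_max) * d2l l z (h * ev f2 (X ord_max) + ev g (X ord_max)))
  + v (v_y n) / N * (ev f1 (X ord_max) * d2l l y (h * ev f2 (X ord_max) + ev g (X ord_max)))
  + lam * (h * (ip f1 f2 + ip f1 f2) + (ip f1 g + ip f1 g))).
  apply: funext => h; rewrite /dRbold !evalH_line.
  congr (_ + _ + _ + _).
  - by congr (_ * _); apply: eq_bigr => i _; rewrite evalH_line; ring.
  - ring.
  - ring.
  - rewrite !(ipDr hip) !(ipZr hip); ring.
rewrite derive1E; apply: derive_val.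
have dl y' (hy' : Ysp y') x1 x := is_derive_mulrl (ev f1 x1)
  (is_derive_comp_affine (ev f2 x) (ev g x) 0 (loss_derivable2 hl hy')).
have T1 := is_derive_mulrl N^-1 (is_derive_sumf (fun i =>
  is_derive_mulrl (v (iv i)) (dl _ (hY i) (X (iX i)) (X (iX i))))).
have T2 := is_derive_mulrl (v (v_z n) / N) (dl _ hz (X ord_max) (X ord_max)).
have T3 := is_derive_mulrl (v (v_y n) / N) (dl _ hy (X ord_max) (X ord_max)).
have T4 := is_derive_mulrl lam
  (is_derive_affine (ip f1 f2 + ip f1 f2) (ip f1 g + ip f1 g) 0).
apply: (is_derive_eq (is_derive_addf (is_derive_addf (is_derive_addf T1 T2) T3) T4)).
under eq_bigr => i _ do rewrite mul0r add0r.
by rewrite !mul0r !add0r /d2Rform /d22l.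
Qed.

Lemma hessian_Rhat a : hessian (Rhat ip Kf l lam X Y y z v) a =
  \matrix_(i, j) d2Rform (comb Kf X a) (Kf (X i)) (Kf (X j)).
Proof.
have comb_line h i b : comb Kf X (h *: delta_mx i 0 + b) = h *: Kf (X i) + comb Kf X b.
  by rewrite combD combZ comb_delta.
apply/matrixP => i j; rewrite !mxE.
have -> : (fun b => derive (Rhat ip Kf l lam X Y y z v) b (delta_mx i 0)) =
          (fun b => dRbold (comb Kf X b) (Kf (X i))).
  apply: funext => b; rewrite derive_line -Rbold_line_derive.
  by under eq_fun => h do rewrite /Rhat comb_line.
rewrite derive_line -dRbold_line_derive.
by under eq_fun => h do rewrite comb_line.
Qed.

End Differentials.

Section SecondDifferential.
Variables (R : realType) (d n : nat) (V : lmodType R) (ip : V -> V -> R)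
  (Kf : 'rV[R]_d -> V) (X : 'I_n.+1 -> 'rV[R]_d).
Hypothesis hip : is_inner_product ip.
Variables (Ysp : set R) (l : R -> R -> R) (beta lam : R) (Y : 'I_n -> R) (y z : R).
Variables (v : 'I_n.+2 -> R) (g0 : V).

Local Notation ev := (evalH ip Kf).
Local Notation T := (d2Rbold ip Kf l lam X Y y z v g0).
Local Notation D2 := (d2Rform ip Kf X l lam Y y z v g0).

Lemma ip_d2Rbold f1 f2 : ip (T f2) f1 = D2 f1 f2.
Proof.
rewrite /d2Rbold !(ipDl hip) /d2Rform; congr (_ + _ + _ + _).
- rewrite (ipZl hip) (ip_suml hip); congr (_ * _); apply: eq_bigr => i _.
  rewrite (ipZl hip) /evalH (ipC hip (Kf _) f2) (ipC hip (Kf _) f1); ring.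
- rewrite (ipZl hip) /evalH (ipC hip (Kf _) f2) (ipC hip (Kf _) f1); ring.
- rewrite (ipZl hip) /evalH (ipC hip (Kf _) f2) (ipC hip (Kf _) f1); ring.
- rewrite (ipZl hip) (ipC hip f2 f1); ring.
Qed.

Lemma d2Rform_sym f1 f2 : D2 f1 f2 = D2 f2 f1.
Proof.
rewrite /d2Rform (ipC hip f1 f2); congr (_ + _ + _ + _).
- by congr (_ * _); apply: eq_bigr => i _; ring.
- ring.
- ring.
Qed.

Lemma d2Rform_subr f g1 g2 : D2 f (g1 - g2) = D2 f g1 - D2 f g2.
Proof. by rewrite !(d2Rform_sym f) -!ip_d2Rbold (ipBr hip). Qed.

Lemma d2Rform_eval0 f1 f2 : (forall j, ev f1 (X j) = 0) ->
  D2 f1 f2 = lam * (ip f1 f2 + ip f1 f2).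
Proof.
move=> ev0; rewrite /d2Rform !ev0 big1 => [|i _]; last by rewrite ev0 mul0r mulr0.
have arith (c a b p q s : R) : c * 0 + a * (0 * p) + b * (0 * q) + s = s.
  by rewrite mulr0 !mul0r !mulr0 !add0r.
exact: arith.
Qed.

Hypothesis hl : loss_assumptions Ysp l beta.
Hypotheses (hY : forall i, Ysp (Y i)) (hy : Ysp y) (hz : Ysp z).
Hypothesis v_ge0 : forall k, 0 <= v k.

Lemma d2Rform_coercive f : lam * (ip f f + ip f f) <= D2 f f.
Proof.
have sq_ge0 w y' x : 0 <= w -> Ysp y' ->
    0 <= w * (ev f x * (d22l l y' (ev g0 x) * ev f x)).
  move=> w0 hy'; have -> : w * (ev f x * (d22l l y' (ev g0 x) * ev f x))
    = w * d22l l y' (ev g0 x) * ev f x ^+ 2 by ring.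
  by rewrite mulr_ge0 ?sqr_ge0 // mulr_ge0 // (loss_derive2_ge0 hl).
have wN k : 0 <= v k / n.+1%:R by rewrite divr_ge0 ?ler0n.
rewrite /d2Rform lerDr addr_ge0 ?sq_ge0 // addr_ge0 ?sq_ge0 //.
by rewrite mulr_ge0 ?invr_ge0 ?ler0n // sumr_ge0 // => i _; rewrite sq_ge0.
Qed.

Hypothesis lam_gt0 : 0 < lam.

Lemma d2Rform_le0_eq0 f : D2 f f <= 0 -> f = 0.
Proof.
move=> D2le0; apply: (ip_le0_eq0 hip).
have := le_trans (d2Rform_coercive f) D2le0.
by rewrite pmulr_rle0 //; have := ip_ge0 hip f; lra.
Qed.

Local Notation K := (Gram ip Kf X).
Local Notation comb := (comb Kf X).
Local Notation H := (\matrix_(i < n.+1, j < n.+1) D2 (Kf (X i)) (Kf (X j))).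

Lemma d2Rform_matrix_sym : H^T = H.
Proof. by apply/matrixP => i j; rewrite !mxE d2Rform_sym. Qed.

Lemma d2Rform_mulmx a j : (H *m a) j 0 = ip (T (comb a)) (Kf (X j)).
Proof.
rewrite ip_d2Rbold d2Rform_sym -ip_d2Rbold (ipC hip) (ip_comb Kf X hip) mxE.
by apply: eq_bigr => k _; rewrite mxE (ipC hip (Kf _)) ip_d2Rbold d2Rform_sym mulrC.
Qed.

Lemma d2Rform_matrix_ker (a : 'cV[R]_n.+1) : H *m a = 0 -> K *m a = 0.
Proof.
move=> Ha0.
have : D2 (comb a) (comb a) = 0.
  rewrite -ip_d2Rbold (ipC hip) (ip_comb Kf X hip) big1 // => j _.
  by rewrite (ipC hip) -d2Rform_mulmx Ha0 mxE mulr0.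
move=> /eqP; rewrite eq_le => /andP[/d2Rform_le0_eq0 a0 _].
by apply/matrixP => j k; rewrite (ord1 k) -ip_comb_Gram // a0 (ip0l hip) mxE.
Qed.

Lemma restr_inv_d2Rbold j :
  restr_inv T (spanA Kf X) (Kf (X j)) = comb (mpinv H *m col j K).
Proof.
set b := mpinv H *m col j K.
have Hb : H *m b = col j K.
  rewrite /b colE !mulmxA mulmx_mpinv_ker ?Gram_sym //.
  - exact: d2Rform_matrix_sym.
  - exact: d2Rform_matrix_ker.
have T_inj g1 g2 : T g1 = Kf (X j) -> T g2 = Kf (X j) -> g1 = g2.
  move=> e1 e2; apply/eqP; rewrite -subr_eq0; apply/eqP/d2Rform_le0_eq0.
  by rewrite d2Rform_subr -!ip_d2Rbold e1 e2 subrr.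
have Tb : T (comb b) = Kf (X j).
  set u := T (comb b) - Kf (X j).
  have ev_u k : ip u (Kf (X k)) = 0.
    by rewrite (ipBl hip) -d2Rform_mulmx Hb !mxE /kappa (ipC hip (Kf (X j))) subrr.
  have u_b : ip u (comb b) = 0.
    by rewrite (ipC hip) (ip_comb Kf X hip) big1 // => k _; rewrite (ipC hip) ev_u mulr0.
  suff /eqP : u = 0 by rewrite subr_eq0 => /eqP.
  apply: (ip_le0_eq0 hip); rewrite {2}/u (ipBr hip) (ipC hip u) ip_d2Rbold.
  by rewrite d2Rform_eval0 // u_b ev_u addr0 mulr0 subrr.
have solvable : exists g, spanA Kf X g /\ T g = Kf (X j).
  by exists (comb b); split => //; exists b.
have [_ Tg] := xgetPex 0 solvable.
exact: T_inj Tg Tb.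
Qed.

End SecondDifferential.

Lemma uvec_ge0 (R : realType) n (k : 'I_n.+2) : 0 <= uvec R k.
Proof. by rewrite /uvec; case: ifP. Qed.

Unset Implicit Arguments.

Theorem lemma17 (R : realType) (d n : nat)
  (Xsp : set 'rV[R]_d) (Ysp : set R)
  (V : lmodType R) (ip : V -> V -> R) (Kf : 'rV[R]_d -> V)
  (hH : is_RKHS ip Kf)
  (l : R -> R -> R) (beta : R) (hl : loss_assumptions Ysp l beta)
  (lam : R) (hlam : 0 < lam)
  (X : 'I_n.+1 -> 'rV[R]_d) (hX : forall i, Xsp (X i))
  (Y : 'I_n -> R) (hY : forall i, Ysp (Y i))
  (y z : R) (hy : Ysp y) (hz : Ysp z)
  (fhat : V)
  (hfhat : forall g : V, Rbold ip Kf l lam X Y y z (@uvec R n) fhat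
                         <= Rbold ip Kf l lam X Y y z (@uvec R n) g)
  (ahat : 'cV[R]_n.+1)
  (hahat_range : in_rangeK ip Kf X ahat)
  (hahat_min : forall a : 'cV[R]_n.+1, in_rangeK ip Kf X a ->
      Rhat ip Kf l lam X Y y z (@uvec R n) ahat <= Rhat ip Kf l lam X Y y z (@uvec R n) a)
  (z' : R) (hz' : Ysp z') :
  Ibold ip Kf l lam X Y y z fhat z'
  = \sum_(i < n.+1) (Ivec ip Kf l lam X Y y z ahat z') i 0 *: Kf (X i).
Proof.
case: hH => hip _ _.
have -> : fhat = comb Kf X ahat.
  exact: (Rbold_minimizer_comb hip hl hY hy hz (@uvec_ge0 R n) hlam hfhat hahat_min).
rewrite /Ibold /Ivec (hessian_Rhat Kf X hip lam hl hY hy hz).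
rewrite (restr_inv_d2Rbold Kf X hip _ hl hY hy hz (@uvec_ge0 R n) hlam).
rewrite -/(comb Kf X _) combZ.
by rewrite /evalH ip_comb_Gram_col.
Qed.
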